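(* Let $G=(V,E)$ be connected with $n\ge 3$ vertices. For every $u\in V_{\ge2}$, $$(n-1)(n-2)\,\mathrm{bc}(u)=\sum_{s\in V_{\ge2}\setminus\{u\}}\big(1+\mathrm{deg}_1(s)\big)\big(\tilde\delta_s(u)+\zeta_s(u)\big)+\mathrm{deg}_1(u)\big(2n-3-\mathrm{deg}_1(u)\big).$$
   Context: Graphs are finite, simple, undirected, unweighted. $\sigma_{st}$ = number of shortest $s$–$t$ paths, $\sigma_{st}(v)$ = number of those through $v\notin\{s,t\}$; $\mathrm{bc}(v)=\frac{1}{(n-1)(n-2)}\sum_{s\ne t,\ s,t\ne v}\sigma_{st}(v)/\sigma_{st}$ in $G$ (ordered pairs). $V_1$ = degree-1 vertices of $G$, $V_{\ge2}=V\setminus V_1$, $\tilde G$ = subgraph induced by $V_{\ge2}$ with counts $\tilde\sigma$. $\mathrm{deg}_1(t)$ = number of neighbors of $t$ in $G$ of degree 1. For $s,u\in V_{\ge2}$: $\tilde\delta_s(u)=\sum_{t\in V_{\ge2},t\ne s,u}\tilde\sigma_{st}(u)/\tilde\sigma_{st}$, $\zeta_s(u)=\sum_{t\in V_{\ge2},t\ne s,u}\mathrm{deg}_1(t)\tilde\sigma_{st}(u)/\tilde\sigma_{st}$. *)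

From HB Require Import structures.
From mathcomp Require Import all_boot all_order all_algebra.
Set Implicit Arguments. Unset Strict Implicit. Unset Printing Implicit Defensive.
Import Order.TTheory GRing.Theory Num.Theory.

(* A finite simple undirected graph: vertex type T : finType with an
   adjacency relation e : rel T that is symmetric and irreflexive. *)

Section Graph.
Variable T : finType.
Variable e : rel T.

(* walks of length k from s to t, encoded as k.-tuples (the vertices after s) *)
Definition is_walk (k : nat) (s t : T) (p : k.-tuple T) : bool :=
  path e s p && (last s p == t).

(* graph distance: least k with a walk of length k from s to t
   (equals #|T| if t is unreachable; irrelevant for connected graphs) *)
Definition gdist (s t : T) : nat :=
  find (fun k => [exists p : k.-tuple T, is_walk s t p]) (iota 0 #|T|).

Definition shortest_paths (s t : T) : {set (gdist s t).-tuple T} :=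
  [set p | is_walk s t p].

Definition sigma (s t : T) : nat := #|shortest_paths s t|.

Definition sigma_via (s t v : T) : nat :=
  #|[set p in shortest_paths s t | v \in s :: (p : seq T)]|.

Definition deg (v : T) : nat := #|[set w | e v w]|.

Definition connected_graph : Prop := forall x y : T, connect e x y.

End Graph.

Local Open Scope ring_scope.

Definition bc (T : finType) (e : rel T) (v : T) : rat :=
  (((#|T| - 1)%:R * (#|T| - 2)%:R)^-1) *
  \sum_(s : T | s != v) \sum_(t : T | (t != s) && (t != v))
      ((sigma_via e s t v)%:R / (sigma e s t)%:R).

Definition V1 (T : finType) (e : rel T) : {set T} := [set v | deg e v == 1%N].
Definition Vge2 (T : finType) (e : rel T) : {set T} := ~: V1 e.

Definition induced (T : finType) (e : rel T) (A : {set T}) : rel T :=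
  fun x y => [&& e x y, x \in A & y \in A].

Definition deg1 (T : finType) (e : rel T) (t : T) : nat :=
  #|[set w | e t w & deg e w == 1%N]|.

Definition tsigma (T : finType) (e : rel T) (s t : T) : nat :=
  sigma (induced e (Vge2 e)) s t.
Definition tsigma_via (T : finType) (e : rel T) (s t u : T) : nat :=
  sigma_via (induced e (Vge2 e)) s t u.

Definition tdelta (T : finType) (e : rel T) (s u : T) : rat :=
  \sum_(t in Vge2 e | (t != s) && (t != u))
     ((tsigma_via e s t u)%:R / (tsigma e s t)%:R).

Definition zeta (T : finType) (e : rel T) (s u : T) : rat :=
  \sum_(t in Vge2 e | (t != s) && (t != u))
     ((deg1 e t)%:R * (tsigma_via e s t u)%:R / (tsigma e s t)%:R).

From mathcomp Require Import all_boot all_order all_algebra.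
From mathcomp Require Import zify ring.
Import Order.TTheory GRing.Theory Num.Theory.
Set Implicit Arguments. Unset Strict Implicit. Unset Printing Implicit Defensive.

(* A pendant vertex never lies in the interior of a shortest path, and a shortest
   path ending (or starting) at a pendant vertex is a shortest path to (from) its
   unique neighbour extended by one edge.  Hence sigma_st(u)/sigma_st does not change
   when a pendant endpoint is replaced by its neighbour, and between vertices of
   V_{>=2} the shortest paths of G are exactly those of G~.  Grouping the pairs (s, t)
   in the sum defining bc(u) by the neighbours of their pendant endpoints produces the
   weights 1 + deg_1; the pairs involving the pendant neighbours of u itself, for
   which the ratio is 1, produce the correction term deg_1(u) (2n - 3 - deg_1(u)). *)

Section Walks.
Variables (T : finType) (e : rel T).

Definition walk (s t : T) (q : seq T) := path e s q && (last s q == t).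

Lemma gdist_le_size s t q : walk s t q -> gdist e s t <= size q.
Proof.
move=> w; rewrite /gdist.
have [lt_q_T | ] := ltnP (size q) #|T|; last first.
  by apply: leq_trans; rewrite -[X in (_ <= X)%N](size_iota 0) find_size.
rewrite leqNgt; apply/negP => /(before_find 0%N); rewrite nth_iota // add0n.
by move/negbT/negP; apply; apply/existsP; exists (in_tuple q).
Qed.

Lemma walk_connect s t q : walk s t q -> connect e s t.
Proof. by case/andP=> p /eqP <-; apply/connectP; exists q. Qed.

Lemma gdist_shortest s t : connect e s t ->
  exists2 q, walk s t q & size q = gdist e s t.
Proof.
case/connectP=> p pp ->; have [q pq uq _] := shortenP pp.
have lt_q_T : size q < #|T| by have /= <- := card_uniqP uq; apply: max_card.
set P := fun k => [exists p : k.-tuple T, is_walk e s (last s q) p].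
have hasP : has P (iota 0 #|T|).
  apply/hasP; exists (size q); first by rewrite mem_iota.
  by apply/existsP; exists (in_tuple q); rewrite /is_walk pq eqxx.
have := nth_find 0%N hasP; rewrite -/(gdist e s (last s q)).
move: hasP; rewrite has_find size_iota => ltT.
by rewrite nth_iota // add0n => /existsP[r wr]; exists r; rewrite ?size_tuple.
Qed.

Lemma gdist_eq_size s t q : walk s t q ->
  (forall r, walk s t r -> size q <= size r) -> gdist e s t = size q.
Proof.
move=> w q_min; apply/eqP; rewrite eqn_leq gdist_le_size //=.
by have [r wr <-] := gdist_shortest (walk_connect w); apply: q_min.
Qed.

Lemma sigma_gt0 s t : connect e s t -> 0 < sigma e s t.
Proof.
move=> /gdist_shortest[q wq /eqP sq].
by apply/card_gt0P; exists (Tuple sq); rewrite inE.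
Qed.

Definition nwalks k (s t : T) (P : pred (seq T)) :=
  #|[set p : k.-tuple T | is_walk e s t p && P (s :: p)]|.

Lemma sigmaE s t : sigma e s t = nwalks (gdist e s t) s t predT.
Proof. by apply: eq_card => p; rewrite !inE andbT. Qed.

Lemma sigma_viaE s t v :
  sigma_via e s t v = nwalks (gdist e s t) s t (fun q => v \in q).
Proof. by apply: eq_card => p; rewrite !inE. Qed.

Lemma eq_nwalks k s t (P Q : pred (seq T)) :
  (forall p : k.-tuple T, is_walk e s t p -> P (s :: p) = Q (s :: p)) ->
  nwalks k s t P = nwalks k s t Q.
Proof.
move=> PQ; apply: eq_card => p; rewrite !inE.
by case w: (is_walk e s t p); rewrite //= PQ.
Qed.

Lemma nwalks_rcons t t' : (forall w, e w t = (w == t')) -> forall k s P,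
  nwalks k.+1 s t P = nwalks k s t' (fun q => P (rcons q t)).
Proof.
move=> adj_t k s P; rewrite /nwalks.
have rcons_inj : injective (fun p : k.-tuple T => [tuple of rcons p t]).
  by move=> p q h; apply: val_inj; apply: (@rcons_injl _ t); apply: (congr1 val h).
rewrite -(card_imset _ rcons_inj); apply: eq_card => p; rewrite inE.
apply/idP/imsetP => [|[q]]; last first.
  rewrite inE /is_walk => /andP[/andP[pq lq] Pq] ->.
  by rewrite /= rcons_path last_rcons adj_t pq lq eqxx.
case/tupleP: p => x q; set q' := [tuple of belast x q].
have -> : [tuple of x :: q] = [tuple of rcons q' (last x q)] by apply/val_inj/lastI.
rewrite /is_walk /= rcons_path last_rcons => /andP[/andP[/andP[pq lq] /eqP yt] Pq].
by rewrite yt adj_t in lq; exists q'; rewrite -?yt // inE pq lq.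
Qed.

Lemma nwalks_cons s s' : (forall w, e s w = (w == s')) -> forall k t P,
  nwalks k.+1 s t P = nwalks k s' t (fun q => P (s :: q)).
Proof.
move=> adj_s k t P; rewrite /nwalks.
have cons_inj : injective (fun p : k.-tuple T => [tuple of s' :: p]).
  by move=> p q /(congr1 val) [] /val_inj.
rewrite -(card_imset _ cons_inj); apply: eq_card => p; rewrite inE.
apply/idP/imsetP => [|[q]]; last first.
  by rewrite inE /is_walk => /andP[/andP[pq lq] Pq] ->; rewrite /= adj_s eqxx pq lq.
case/tupleP: p => x q; rewrite /is_walk /= adj_s.
move=> /andP[/andP[/andP[/eqP xs pq] lq] Pq]; subst x.
by exists q; rewrite // inE /is_walk pq lq.
Qed.

End Walks.

Section LeafEndpoint.
Variables (T : finType) (e : rel T).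

Lemma gdist_leaf_target s t t' : connect e s t' -> (forall w, e w t = (w == t')) ->
  s != t -> gdist e s t = (gdist e s t').+1.
Proof.
move=> /gdist_shortest[q wq sq] adj_t st.
have wqt : walk e s t (rcons q t) by rewrite /walk rcons_path last_rcons adj_t eqxx andbT.
have [r wr sr] := gdist_shortest (walk_connect wqt).
have := gdist_le_size wqt; rewrite -{}sr size_rcons sq.
case/lastP: r wr => [|r x]; first by rewrite /walk /= (negbTE st).
rewrite /walk rcons_path last_rcons => /andP[/andP[pr lr] /eqP xt].
rewrite xt adj_t in lr; have /gdist_le_size : walk e s t' r by rewrite /walk pr lr.
by rewrite size_rcons; lia.
Qed.

Lemma gdist_leaf_source s s' t : connect e s' t -> (forall w, e s w = (w == s')) ->
  s != t -> gdist e s t = (gdist e s' t).+1.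
Proof.
move=> /gdist_shortest[q wq sq] adj_s st.
have wsq : walk e s t (s' :: q) by rewrite /walk /= adj_s eqxx.
have [r wr sr] := gdist_shortest (walk_connect wsq).
have := gdist_le_size wsq; rewrite -{}sr /= sq.
case: r wr => [|x r]; first by rewrite /walk /= (negbTE st).
rewrite /walk /= adj_s => /andP[/andP[/eqP -> pr] lr].
have /gdist_le_size : walk e s' t r by rewrite /walk pr lr.
by rewrite /=; lia.
Qed.

Lemma sigma_leaf_target s t t' : connect e s t' -> (forall w, e w t = (w == t')) ->
  s != t -> sigma e s t = sigma e s t'.
Proof.
by move=> c adj_t st; rewrite !sigmaE (gdist_leaf_target c adj_t st) (nwalks_rcons adj_t).
Qed.

Lemma sigma_via_leaf_target s t t' v : connect e s t' -> (forall w, e w t = (w == t')) ->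
  s != t -> v != t -> sigma_via e s t v = sigma_via e s t' v.
Proof.
move=> c adj_t st vt; rewrite !sigma_viaE (gdist_leaf_target c adj_t st) (nwalks_rcons adj_t).
by apply: eq_nwalks => q _; rewrite -cats1 mem_cat mem_seq1 (negbTE vt) orbF.
Qed.

Lemma sigma_leaf_source s s' t : connect e s' t -> (forall w, e s w = (w == s')) ->
  s != t -> sigma e s t = sigma e s' t.
Proof.
by move=> c adj_s st; rewrite !sigmaE (gdist_leaf_source c adj_s st) (nwalks_cons adj_s).
Qed.

Lemma sigma_via_leaf_source s s' t v : connect e s' t -> (forall w, e s w = (w == s')) ->
  s != t -> v != s -> sigma_via e s t v = sigma_via e s' t v.
Proof.
move=> c adj_s st vs; rewrite !sigma_viaE (gdist_leaf_source c adj_s st) (nwalks_cons adj_s).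
by apply: eq_nwalks => q _; rewrite /= inE (negbTE vs).
Qed.

End LeafEndpoint.

Section InducedSubgraph.
Variables (T : finType) (e : rel T) (A : {set T}).
Hypothesis e_sym : symmetric e.
Hypothesis pendant_outside : forall x, x \notin A -> exists x', forall w, e x w = (w == x').

Lemma path_induced x p : x \in A -> path (induced e A) x p = path e x p && all (mem A) p.
Proof.
elim: p x => [|y p IHp] x xA //=; rewrite /induced xA /=.
by case: (e x y) => //=; case yA: (y \in A); rewrite /= ?IHp ?andbF.
Qed.

(* An interior vertex outside A would be entered and left through its only
   neighbour, so the walk could be shortened by two. *)
Lemma shortest_walk_inside s t q : s \in A -> t \in A -> walk e s t q ->
  size q = gdist e s t -> all (mem A) q.
Proof.
move=> sA tA w sq; apply/allP => x xq; change (x \in A); apply: contraT => xA.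
have [x' adj_x] := pendant_outside xA.
move: w sq; case/splitPr: xq => q1 [|z q2].
  by rewrite /walk last_cat /= => /andP[_ /eqP xt]; rewrite xt tA in xA.
rewrite /walk cat_path last_cat /= adj_x => /andP[/and4P[pq1 ex /eqP zx pq2] lq].
rewrite {}zx e_sym adj_x in ex pq2 lq; rewrite -(eqP ex) in pq2 lq.
have /gdist_le_size : walk e s t (q1 ++ q2) by rewrite /walk cat_path last_cat pq1 pq2.
by rewrite !size_cat /=; lia.
Qed.

Lemma walk_induced s t q : s \in A -> walk (induced e A) s t q -> walk e s t q.
Proof. by move=> sA; rewrite /walk path_induced // => /andP[/andP[-> _] ->]. Qed.

Lemma gdist_induced s t : s \in A -> t \in A -> connect e s t ->
  gdist (induced e A) s t = gdist e s t.
Proof.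
move=> sA tA /gdist_shortest[q wq sq].
have inA := shortest_walk_inside sA tA wq sq.
have wq' : walk (induced e A) s t q by move: wq; rewrite /walk path_induced // inA andbT.
rewrite -sq; apply: gdist_eq_size wq' _ => r /(walk_induced sA) wr.
by rewrite sq; apply: gdist_le_size wr.
Qed.

Lemma nwalks_induced s t P : s \in A -> t \in A ->
  nwalks (induced e A) (gdist e s t) s t P = nwalks e (gdist e s t) s t P.
Proof.
move=> sA tA; apply: eq_card => p; rewrite !inE; congr (_ && _).
apply/idP/idP => [|w]; first exact: walk_induced.
have inA := shortest_walk_inside sA tA w (size_tuple p).
by move: w; rewrite /is_walk path_induced // inA andbT.
Qed.

Lemma sigma_induced s t : s \in A -> t \in A -> connect e s t ->
  sigma (induced e A) s t = sigma e s t.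
Proof. by move=> sA tA c; rewrite !sigmaE gdist_induced // nwalks_induced. Qed.

Lemma sigma_via_induced s t v : s \in A -> t \in A -> connect e s t ->
  sigma_via (induced e A) s t v = sigma_via e s t v.
Proof. by move=> sA tA c; rewrite !sigma_viaE gdist_induced // nwalks_induced. Qed.

End InducedSubgraph.

Local Open Scope ring_scope.

Lemma sum_except2 (R : zmodType) (I : finType) (F : I -> R) x y : x != y ->
  \sum_(i | (i != x) && (i != y)) F i = \sum_i F i - F x - F y.
Proof.
move=> xy; rewrite [in RHS](bigD1 x) //= [in RHS](bigD1 y) 1?eq_sym //=.
by rewrite [F x + _]addrC addrK [F y + _]addrC addrK.
Qed.

Section PendantVertices.
Variables (T : finType) (e : rel T).
Hypothesis e_sym : symmetric e.
Hypothesis e_conn : connected_graph e.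
Hypothesis n_ge3 : (3 <= #|T|)%N.

Definition nbr (x : T) : T := odflt x [pick w | e x w].

Lemma leaf_adj x : x \in V1 e -> forall w, e x w = (w == nbr x).
Proof.
rewrite inE => /cards1P[y /setP adj_y].
have adj w : e x w = (w == y) by have := adj_y w; rewrite !inE.
suff -> : nbr x = y by [].
rewrite /nbr; case: pickP => [w | none] /=; first by rewrite adj => /eqP.
by have := none y; rewrite adj eqxx.
Qed.

Lemma notin_Vge2 x : (x \notin Vge2 e) = (x \in V1 e).
Proof. by rewrite in_setC negbK. Qed.

Lemma leaf_neq x y : x \in V1 e -> y \in Vge2 e -> x != y.
Proof. by move=> xL; apply: contraTneq => <-; rewrite notin_Vge2. Qed.

(* Two adjacent leaves would form a connected component of size 2. *)
Lemma leaf_nbr_ge2 x : x \in V1 e -> nbr x \in Vge2 e.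
Proof.
move=> xL; rewrite -[_ \in _]negbK notin_Vge2; apply/negP => yL.
have adj_x := leaf_adj xL; have adj_y := leaf_adj yL.
have nbr_y : nbr (nbr x) = x by apply/eqP; rewrite eq_sym -adj_y e_sym adj_x.
have closedS : closed e (mem [set x; nbr x]).
  have stay a b : e a b -> a \in [set x; nbr x] -> b \in [set x; nbr x].
    rewrite !inE => + /orP[] /eqP ea;
      by rewrite ea ?adj_x ?adj_y ?nbr_y => /eqP->; rewrite eqxx ?orbT.
  by move=> a b ab; apply/idP/idP; apply: stay; rewrite // e_sym.
have : (#|T| <= #|[set x; nbr x]|)%N.
  rewrite -cardsT subset_leq_card //; apply/subsetP => z _.
  by rewrite -(closed_connect closedS (e_conn x z)) !inE eqxx.
by rewrite cards2; lia.
Qed.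

Lemma sum_leaves_nbr (R : pzRingType) (F : T -> R) :
  \sum_(t in V1 e) F (nbr t) = \sum_(b in Vge2 e) (deg1 e b)%:R * F b.
Proof.
rewrite (partition_big nbr (mem (Vge2 e))) => [|t]; last exact: leaf_nbr_ge2.
apply: eq_bigr => b bV; rewrite (eq_bigr (fun=> F b)) => [|t /andP[_ /eqP->]] //.
rewrite sumr_const mulr_natl; congr (_ *+ _); apply: eq_card => w.
have wL : (w \in V1 e) = (deg e w == 1)%N by rewrite inE.
rewrite unfold_in inE -wL andbC; case: (boolP (w \in V1 e)) => w_leaf /=.
  by rewrite !andbT e_sym leaf_adj // eq_sym.
by rewrite !andbF.
Qed.

Lemma sum_Vge2_weights : \sum_(s in Vge2 e) (1 + (deg1 e s)%:R) = #|T|%:R :> rat.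
Proof.
rewrite big_split /=.
have -> : \sum_(b in Vge2 e) (deg1 e b)%:R = \sum_(t in V1 e) 1 :> rat.
  by rewrite (sum_leaves_nbr (fun=> 1)); apply: eq_bigr => b _; rewrite mulr1.
by rewrite !sumr_const -natrD /Vge2 addnC cardsC.
Qed.

Variable u : T.
Hypothesis u_ge2 : u \in Vge2 e.

Definition dep (s t : T) : rat := (sigma_via e s t u)%:R / (sigma e s t)%:R.

Definition delta (s : T) : rat := \sum_(t | (t != s) && (t != u)) dep s t.

Lemma dep_leaf_target s t : t \in V1 e -> s != t -> dep s t = dep s (nbr t).
Proof.
move=> tL st; have adj_t w : e w t = (w == nbr t) by rewrite e_sym leaf_adj.
have ut : u != t by rewrite eq_sym leaf_neq.
rewrite /dep (sigma_via_leaf_target (e_conn s _) adj_t) //.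
by rewrite (sigma_leaf_target (e_conn s _) adj_t).
Qed.

Lemma dep_leaf_source s t : s \in V1 e -> s != t -> dep s t = dep (nbr s) t.
Proof.
move=> sL st; have adj_s := leaf_adj sL; have us : u != s by rewrite eq_sym leaf_neq.
rewrite /dep (sigma_via_leaf_source (e_conn _ t) adj_s) //.
by rewrite (sigma_leaf_source (e_conn _ t) adj_s).
Qed.

Lemma dep_diag s : s != u -> dep s s = 0.
Proof.
move=> su; have gdist0 : gdist e s s = 0%N.
  by apply/eqP; rewrite -leqn0 (@gdist_le_size _ _ _ _ [::]) //= /walk /= eqxx.
rewrite /dep sigma_viaE gdist0 /nwalks (eq_card (B := pred0)) ?card0 ?mul0r // => p.
by rewrite !inE tuple0 /= in_nil orbF eq_sym (negbTE su) andbF.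
Qed.

Lemma dep_all_via s t : sigma_via e s t u = sigma e s t -> dep s t = 1.
Proof. by rewrite /dep => ->; rewrite divff // pnatr_eq0 -lt0n sigma_gt0. Qed.

Lemma dep_from_u t : dep u t = 1.
Proof.
apply: dep_all_via; rewrite sigma_viaE sigmaE.
by apply: eq_nwalks => p _; rewrite /= mem_head.
Qed.

Lemma dep_to_u s : dep s u = 1.
Proof.
apply: dep_all_via; rewrite sigma_viaE sigmaE; apply: eq_nwalks => p /andP[_ /eqP lu].
by rewrite /= -[X in X \in _]lu mem_last.
Qed.

Lemma dep_induced s t : s \in Vge2 e -> t \in Vge2 e ->
  (tsigma_via e s t u)%:R / (tsigma e s t)%:R = dep s t.
Proof.
have pendant x : x \notin Vge2 e -> exists x', forall w, e x w = (w == x').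
  by rewrite notin_Vge2 => xL; exists (nbr x); apply: leaf_adj.
move=> sV tV; rewrite /tsigma_via /tsigma (sigma_induced e_sym pendant sV tV (e_conn s t)).
by rewrite (sigma_via_induced e_sym pendant u sV tV (e_conn s t)).
Qed.

Lemma delta_ge2 a : a \in Vge2 e -> a != u ->
  delta a = tdelta e a u + zeta e a u + (deg1 e u)%:R.
Proof.
move=> aV au; rewrite /delta (bigID (mem (Vge2 e))) /=.
have -> : \sum_(t | (t != a) && (t != u) && (t \in Vge2 e)) dep a t = tdelta e a u.
  rewrite /tdelta; apply: eq_big => [t | t /andP[_ tV]]; first by rewrite andbC.
  by rewrite dep_induced.
have -> : \sum_(t | (t != a) && (t != u) && (t \notin Vge2 e)) dep a t =
          \sum_(t in V1 e) dep a (nbr t).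
  apply: eq_big => [t | t /andP[_]]; rewrite notin_Vge2; last first.
    by move=> tL; rewrite dep_leaf_target // eq_sym leaf_neq.
  case: (boolP (t \in V1 e)) => tL; rewrite ?andbF //.
  by rewrite andbT (leaf_neq tL aV) (leaf_neq tL u_ge2).
rewrite sum_leaves_nbr (bigD1 u) //= dep_to_u mulr1 (bigD1 a) /=; last by rewrite aV au.
rewrite dep_diag // mulr0 add0r.
have -> : zeta e a u =
    \sum_(b | (b \in Vge2 e) && (b != u) && (b != a)) (deg1 e b)%:R * dep a b.
  rewrite /zeta; apply: eq_big => [t | t /andP[tV _]]; last by rewrite -mulrA dep_induced.
  by case: (t \in Vge2 e); case: (t != a); case: (t != u).
by rewrite addrCA addrC.
Qed.

Lemma delta_leaf s : s \in V1 e ->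
  delta s = if nbr s == u then (#|T| - 2)%:R else delta (nbr s).
Proof.
move=> sL; have su : s != u by apply: leaf_neq.
have -> : delta s = \sum_(t | (t != s) && (t != u)) dep (nbr s) t.
  by apply: eq_bigr => t /andP[ts _]; rewrite dep_leaf_source // eq_sym.
rewrite sum_except2 //; case: eqP => [-> | /eqP au].
  rewrite !dep_from_u (eq_bigr (fun=> 1)) => [|t _]; last exact: dep_from_u.
  by rewrite sumr_const natrB ?(ltnW n_ge3) //; ring.
have ns : nbr s != s by rewrite eq_sym leaf_neq ?leaf_nbr_ge2.
by rewrite /delta sum_except2 // (dep_leaf_target sL ns) (dep_diag au).
Qed.

Lemma bc_sum_delta :
  ((#|T| - 1)%:R * (#|T| - 2)%:R) * bc e u = \sum_(s | s != u) delta s.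
Proof.
have n12 : (#|T| - 1)%:R * (#|T| - 2)%:R != 0 :> rat.
  by rewrite mulf_neq0 // pnatr_eq0 -lt0n subn_gt0 // ltnW.
by rewrite /bc mulrA mulfV ?mul1r.
Qed.

Lemma sum_delta : \sum_(s | s != u) delta s =
  \sum_(s in Vge2 e | s != u) (1 + (deg1 e s)%:R) * delta s + (deg1 e u)%:R * (#|T| - 2)%:R.
Proof.
rewrite (bigID (mem (Vge2 e))) /=.
pose g b := if b == u then (#|T| - 2)%:R else delta b.
have -> : \sum_(s | (s != u) && (s \notin Vge2 e)) delta s = \sum_(s in V1 e) g (nbr s).
  apply: eq_big => [s | s /andP[_]]; rewrite notin_Vge2; last exact: delta_leaf.
  by case: (boolP (s \in V1 e)) => sL; rewrite ?andbF // andbT leaf_neq.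
rewrite sum_leaves_nbr [X in _ + X = _](bigD1 u) //= /g eqxx.
have -> : \sum_(b in Vge2 e | b != u) (deg1 e b)%:R * g b =
          \sum_(b in Vge2 e | b != u) (deg1 e b)%:R * delta b.
  by apply: eq_bigr => b /andP[_ /negbTE bu]; rewrite /g bu.
rewrite (eq_bigl (fun s => (s \in Vge2 e) && (s != u))) => [|s]; last by rewrite andbC.
rewrite addrCA -big_split addrC; congr (_ + _); apply: eq_bigr => s _.
by rewrite mulrDl mul1r.
Qed.

End PendantVertices.

Unset Implicit Arguments.

Theorem mainTheorem6 (T : finType) (e : rel T)
  (e_sym : symmetric e) (e_irr : irreflexive e)
  (e_conn : connected_graph e) (n_ge3 : (3 <= #|T|)%N)
  (u : T) (u_ge2 : u \in Vge2 e) :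
  ((#|T| - 1)%:R * (#|T| - 2)%:R) * bc e u =
    \sum_(s in Vge2 e | s != u)
       (1 + (deg1 e s)%:R) * (tdelta e s u + zeta e s u)
    + (deg1 e u)%:R * (2 * (#|T|)%:R - 3 - (deg1 e u)%:R).
Proof.
rewrite (bc_sum_delta e n_ge3) (sum_delta e_sym e_conn n_ge3 u_ge2).
have -> : \sum_(s in Vge2 e | s != u) (1 + (deg1 e s)%:R) * delta e u s =
    \sum_(s in Vge2 e | s != u) (1 + (deg1 e s)%:R) * (tdelta e s u + zeta e s u)
    + (deg1 e u)%:R * \sum_(s in Vge2 e | s != u) (1 + (deg1 e s)%:R).
  rewrite mulr_sumr -big_split; apply: eq_bigr => s /andP[sV su].
  by rewrite /= (delta_ge2 e_sym e_conn n_ge3 u_ge2 sV su); ring.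
have weights := sum_Vge2_weights e_sym e_conn n_ge3.
rewrite (bigD1 u) //= in weights.
by rewrite natrB ?(ltnW n_ge3) // -weights; ring.
Qed.
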